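(* Let $q$ be a prime power, $k\ge 2$, $m,n$ positive integers, and let $\mathcal C$ be a nondegenerate $[n,k]_{q^m/q}$ code with generalized rank weights $(d_1,\ldots,d_k)$. Then $\mathcal C$ is minimal if and only if $d_2\ge m+1$.
   Context: An $[n,k]_{q^m/q}$ code is a $k$-dimensional $\mathbb F_{q^m}$-subspace of $\mathbb F_{q^m}^n$ endowed with the rank metric. For $v=(v_1,\ldots,v_n)\in\mathbb F_{q^m}^n$, its rank weight is $\dim_{\mathbb F_q}\langle v_1,\ldots,v_n\rangle_{\mathbb F_q}=r$; if $u=(u_1,\ldots,u_r)$ is an $\mathbb F_q$-basis of $\langle v_1,\ldots,v_n\rangle_{\mathbb F_q}$ and $v=uA$ with $A\in\mathbb F_q^{r\times n}$, the rank support of $v$ is $\mathrm{supp}(v)=$ the $\mathbb F_q$-row space of $A$ (independent of the choice of $u$). A nonzero codeword $v\in\mathcal C$ is minimal if for every $u\in\mathcal C$: $\mathrm{supp}(u)\subseteq\mathrm{supp}(v)$ iff $u=\lambda v$ for some $\lambda\in\mathbb F_{q^m}$; $\mathcal C$ is minimal if all its nonzero codewords are minimal. An $\mathbb F_{q^m}$-subspace $\mathcal A\subseteq\mathbb F_{q^m}^n$ is Galois closed if it is mapped to itself by the coordinatewise $q$-Frobenius map. The $j$-th generalized rank weight is $d_j=\min\{\dim_{\mathbb F_{q^m}}\mathcal A: \mathcal A \text{ Galois closed}, \dim_{\mathbb F_{q^m}}(\mathcal A\cap\mathcal C)\ge j\}$. $\mathcal C$ is nondegenerate if $d_k=n$.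 *)

From HB Require Import structures.
From mathcomp Require Import all_boot all_order all_algebra all_field.
Set Implicit Arguments. Unset Strict Implicit. Unset Printing Implicit Defensive.
Import GRing.Theory.
Local Open Scope ring_scope.

(* Setting: F = F_q a finite field (q = #|F|), L = F_{q^m} a finite-dimensional
   field extension of F (m = \dim {:L}); vectors in L^n are row vectors 'rV[L]_n;
   an [n,k]_{q^m/q} code is a k-dimensional L-subspace of 'rV[L]_n. *)

Section RankMetric.
Variables (F : finFieldType) (L : fieldExtType F) (n : nat).

Definition entry_span (v : 'rV[L]_n) : {vspace L} :=
  <<[seq v ord0 i | i <- enum 'I_n]>>%VS.

Definition rank_weight (v : 'rV[L]_n) : nat := \dim (entry_span v).

(* v = u A with u the (chosen) F-basis vbasis of the entry span;
   A i j = i-th coordinate of v_j in that basis *)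
Definition supp_mx (v : 'rV[L]_n) : 'M[F]_(\dim (entry_span v), n) :=
  \matrix_(i < \dim (entry_span v), j < n) coord (vbasis (entry_span v)) i (v ord0 j).

Definition supp_sub (u v : 'rV[L]_n) : bool := (supp_mx u <= supp_mx v)%MS.

Definition minimal_codeword (C : {vspace 'rV[L]_n}) (v : 'rV[L]_n) : Prop :=
  [/\ v \in C, v != 0 &
      forall u, u \in C -> (supp_sub u v <-> exists lam : L, u = lam *: v)].

Definition minimal_code (C : {vspace 'rV[L]_n}) : Prop :=
  forall v, v \in C -> v != 0 -> minimal_codeword C v.

Definition frobv (v : 'rV[L]_n) : 'rV[L]_n := map_mx (fun x : L => x ^+ #|F|) v.

Definition galois_closed (A : {vspace 'rV[L]_n}) : Prop :=
  forall v, v \in A -> frobv v \in A.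

Definition is_gen_rank_weight (C : {vspace 'rV[L]_n}) (j d : nat) : Prop :=
  (exists A : {vspace 'rV[L]_n},
      [/\ galois_closed A, (j <= \dim (A :&: C))%N & \dim A = d]) /\
  (forall A : {vspace 'rV[L]_n},
      galois_closed A -> (j <= \dim (A :&: C))%N -> (d <= \dim A)%N).

Definition nondegenerate_code (C : {vspace 'rV[L]_n}) : Prop :=
  is_gen_rank_weight C (\dim C) n.

End RankMetric.

(* Write M^%:A for an F-matrix M read over L. For codewords, supp u <= supp v
   forces u into the L-row span of the F-matrix supp_mx v, which has
   rk(v) <= m rows, and the L-row spans of F-matrices are exactly the
   Galois-closed subspaces: the Frobenius fixes a reduced echelon basis of a
   Galois-closed space, so that basis has entries in F.
   If v is not minimal, a witness u spans with v a 2-dimensional subspace of C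
   inside a Galois-closed space of dimension <= m, so d_2 <= m.
   Conversely, if a Galois-closed A = rowspan_L(S^%:A), S with r <= m rows,
   contains independent codewords v1 = c1 S^%:A and v2 = c2 S^%:A, pick x in L
   outside the at most q^r - 1 values -(c1 a)/(c2 a), a in F^r with c2 a != 0,
   which is possible as #|L| = q^m; then supp v2 <= supp (v1 + x v2), so
   v1 + x v2 is not minimal. *)

From HB Require Import structures.
From mathcomp Require Import all_boot all_order all_algebra all_field.
Set Implicit Arguments. Unset Strict Implicit. Unset Printing Implicit Defensive.
Import GRing.Theory.
Local Open Scope ring_scope.

Lemma submx_colkerP (K : fieldType) m1 m2 n (A : 'M[K]_(m1, n)) (B : 'M[K]_(m2, n)) :
  (A <= B)%MS <-> (forall b : 'cV[K]_n, B *m b = 0 -> A *m b = 0).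
Proof.
split=> [/submxP[D ->] b Bb0 | AB]; first by rewrite -mulmxA Bb0 mulmx0.
rewrite submxE; apply/eqP/matrixP=> i j.
have := AB (cokermx B *m delta_mx j 0).
rewrite mulmxA mulmx_coker mul0mx => /(_ erefl) /matrixP /(_ i 0).
by rewrite mulmxA -colE !mxE.
Qed.

Lemma row_pivot_basis (K : fieldType) m n (B : 'M[K]_(m, n)) :
  exists2 W : 'M[K]_(\rank B, n), (W == B)%MS &
    exists f : 'I_(\rank B) -> 'I_n, forall i j, W i (f j) = (i == j)%:R.
Proof.
pose B0 := row_base B.
have fullB0t : row_full B0^T by rewrite /row_full mxrank_tr eq_row_base.
pose f := fullrankfun fullB0t.
pose Q := (rowsub f B0^T)^T.
have uQ : Q \in unitmx by rewrite unitmx_tr fullrowsub_unit.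
exists (invmx Q *m B0).
  apply/eqmxP/(eqmx_trans _ (eq_row_base B)).
  by apply: eqmxMfull; rewrite row_full_unit unitmx_inv.
exists f => i j; have := congr1 (fun M : 'M[K]_(\rank B) => M i j) (mulVmx uQ).
by rewrite !mxE => <-; apply: eq_bigr=> k _; rewrite !mxE.
Qed.

Lemma mulmx_pivotE (R : pzSemiRingType) r n p (W : 'M[R]_(r, n)) (f : 'I_r -> 'I_n)
    (X : 'M[R]_(p, r)) :
  (forall i j, W i (f j) = (i == j)%:R) -> forall i j, (X *m W) i (f j) = X i j.
Proof.
move=> Wf i j; rewrite mxE (bigD1 j) //= Wf eqxx mulr1 big1 ?addr0 // => k /negbTE kj.
by rewrite Wf kj mulr0.
Qed.

Lemma map_pivot_basis_id (K : fieldType) (phi : {rmorphism K -> K}) r n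
    (W : 'M[K]_(r, n)) (f : 'I_r -> 'I_n) :
  (forall i j, W i (f j) = (i == j)%:R) -> (map_mx phi W <= W)%MS -> map_mx phi W = W.
Proof.
move=> Wf /submxP[X defX].
suff X1 : X = 1%:M by rewrite defX X1 mul1mx.
apply/matrixP=> i j; rewrite -(mulmx_pivotE X Wf) -defX mxE Wf.
by rewrite !mxE; case: (i == j); rewrite ?rmorph1 ?rmorph0.
Qed.

Lemma dimv_ge2P (K : fieldType) (vT : vectType K) (U : {vspace vT}) :
  (2 <= \dim U)%N <->
  exists v1 v2, [/\ v1 \in U, v2 \in U, v2 != 0 & v1 \notin <[v2]>%VS].
Proof.
split=> [dimU | [u [v [uU vU v_nz u_notin]]]]; last first.
  have /eqP /= <- : free [:: u; v] by rewrite free_cons span_seq1 u_notin seq1_free v_nz.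
  by apply: dimvS; apply/span_subvP=> w; rewrite !inE => /orP[] /eqP ->.
have vbasis_sub x : x \in (vbasis U : seq vT) -> x \in U := @vbasis_mem _ _ x U.
move: (basis_free (vbasisP U)) vbasis_sub (size_tuple (vbasis U)).
case: (tval (vbasis U)) => [|v1 [|v2 X]] + memU sizeX; rewrite -sizeX // in dimU.
rewrite !free_cons span_cons => /and3P[v1_notin v2_notin _].
exists v1, v2; split; rewrite ?memU ?inE ?eqxx ?orbT //.
  by apply: contraNneq v2_notin => ->; rewrite mem0v.
by apply: contra v1_notin; apply/subvP/addvSl.
Qed.

Section RowSpan.
Variables (K : fieldType) (n : nat).

Definition row_span r (M : 'M[K]_(r, n)) : {vspace 'rV[K]_n} :=
  <<[seq row i M | i <- enum 'I_r]>>%VS.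

Lemma mem_row_span r (M : 'M[K]_(r, n)) x : (x \in row_span M) = (x <= M)%MS.
Proof.
apply/idP/idP=> [/coord_span -> | /submxP[c ->]].
  apply: summx_sub=> i _; apply: scalemx_sub.
  by rewrite -tnth_nth tnth_map row_sub.
rewrite mulmx_sum_row; apply: memv_suml=> i _; apply/memvZ/memv_span.
by apply/mapP; exists i; rewrite ?mem_enum.
Qed.

Lemma dim_row_span r (M : 'M[K]_(r, n)) : (\dim (row_span M) <= r)%N.
Proof. by rewrite (leq_trans (dim_span _)) // size_map size_enum_ord. Qed.

Definition vspace_mx (A : {vspace 'rV[K]_n}) : 'M[K]_(\dim A, n) :=
  \matrix_i (vbasis A)`_i.

Lemma row_span_vspace_mx A : row_span (vspace_mx A) = A.
Proof.
rewrite -[RHS](span_basis (vbasisP A)) /row_span; congr span.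
rewrite -[RHS](map_tnth_enum (vbasis A)); apply: eq_map=> i.
by rewrite rowK (tnth_nth 0).
Qed.

End RowSpan.

Section FiniteExtension.
Variables (F : finFieldType) (L : fieldExtType F).

Definition frob (x : L) : L := x ^+ #|F|.

Lemma frob_is_nmod_morphism : nmod_morphism frob.
Proof.
have [p pr_p pFp] := finPcharP F.
have pnat_q : [pchar L].-nat #|F|.
  by rewrite (card_pprimeChar pFp) pnatX pnatE // (pchar_lalg L) pFp.
by split=> [|x y]; rewrite /frob ?exprDn_pchar // expr0n gtn_eqF // ltnW // finNzRing_gt1.
Qed.

Lemma frob_is_monoid_morphism : monoid_morphism frob.
Proof. by split=> [|x y]; rewrite /frob ?expr1n ?exprMn. Qed.

HB.instance Definition _ := GRing.isNmodMorphism.Build L L frob frob_is_nmod_morphism.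
HB.instance Definition _ := GRing.isMonoidMorphism.Build L L frob frob_is_monoid_morphism.

Lemma frob_alg (a : F) : frob a%:A = a%:A.
Proof. by rewrite /frob -in_algE -rmorphXn expf_card. Qed.

Lemma frob_fixedP (x : L) : reflect (exists a : F, x = a%:A) (frob x == x).
Proof.
have := Fermat's_little_theorem (1%AS : {subfield L}) x.
by rewrite dimv1 expn1 -/(frob x) => <-; apply: vlineP.
Qed.

Lemma exists_notin_seq (s : seq L) :
  (size s < #|F| ^ \dim {:L})%N -> exists x : L, x \notin s.
Proof.
have card_L : #|finvect_type L| = (#|F| ^ \dim {:L})%N.
  by rewrite -(card_vspacef (Vector.class (finvect_type L))) card_vspace.
rewrite -card_L ltnNge => /negP s_small.
have [x x_notin_s | s_full] := pickP (fun x : finvect_type L => x \notin s).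
  by exists x.
case: s_small; apply: leq_trans (card_size (s : seq (finvect_type L))).
apply: subset_leq_card.
by apply/subsetP=> x _; rewrite -[x \in s]negbK s_full.
Qed.

Lemma exists_generic_scalar (T : finType) (y1 y2 : T -> L) (t0 : T) :
  (#|T| <= #|F| ^ \dim {:L})%N -> y2 t0 = 0 ->
  exists x : L, forall t, y1 t + x * y2 t = 0 -> y2 t = 0.
Proof.
move=> T_small y2t0.
pose bad := [seq - y1 t / y2 t | t <- enum T & y2 t != 0].
have [|x x_good] := exists_notin_seq (s := bad).
  rewrite size_map size_filter; apply: leq_trans T_small.
  rewrite cardE -[X in (_ < X)%N](count_predC (fun t => y2 t != 0)).
  rewrite -{1}[count _ _]addn0 ltn_add2l -has_count.
  by apply/hasP; exists t0; rewrite ?mem_enum //= y2t0 eqxx.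
exists x => t comb_t0; apply/eqP; apply: contraNT x_good => y2t_nz.
apply/mapP; exists t; first by rewrite mem_filter y2t_nz mem_enum.
apply: (mulIf y2t_nz); rewrite divfK //; apply/eqP.
by rewrite -addr_eq0 addrC comb_t0.
Qed.

End FiniteExtension.

Section RankMetricCode.
Variables (F : finFieldType) (L : fieldExtType F) (n : nat).
Implicit Types (A C : {vspace 'rV[L]_n}) (u v : 'rV[L]_n).

Local Notation "M ^%:A" := (map_mx (in_alg L) M) (format "M ^%:A").

Definition entry_basis_row v : 'rV[L]_(\dim (entry_span v)) :=
  \row_i (vbasis (entry_span v))`_i.

Lemma mem_entry_span v j : v 0 j \in entry_span v.
Proof. by apply: memv_span; apply/mapP; exists j; rewrite ?mem_enum. Qed.

Lemma entry_basis_row_supp_mx v : entry_basis_row v *m (supp_mx v)^%:A = v.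
Proof.
apply/rowP=> j; rewrite !mxE [RHS](coord_vbasis (mem_entry_span v j)).
by apply: eq_bigr=> i _; rewrite !mxE mulr_algr.
Qed.

Lemma mulmx_alg_colE v (b : 'cV[F]_n) : (v *m b^%:A) 0 0 = \sum_j b j 0 *: v 0 j.
Proof. by rewrite !mxE; apply: eq_bigr=> j _; rewrite mxE mulr_algr. Qed.

Lemma supp_mx_mul_eq0 v (b : 'cV[F]_n) :
  (supp_mx v *m b == 0) = ((v *m b^%:A) 0 0 == 0).
Proof.
have vb_span : (v *m b^%:A) 0 0 \in entry_span v.
  by rewrite mulmx_alg_colE; apply: rpred_sum=> j _; apply/rpredZ/mem_entry_span.
have coord_vb i :
    (supp_mx v *m b) i 0 = coord (vbasis (entry_span v)) i ((v *m b^%:A) 0 0).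
  rewrite mulmx_alg_colE linear_sum !mxE; apply: eq_bigr=> j _.
  by rewrite linearZ /= !mxE mulrC.
apply/eqP/eqP=> vb0.
  rewrite (coord_vbasis vb_span); apply: big1=> i _.
  by rewrite -coord_vb vb0 mxE scale0r.
by apply/colP=> i; rewrite coord_vb vb0 linear0 mxE.
Qed.

Lemma supp_subP u v : supp_sub u v <->
  (forall b : 'cV[F]_n, (v *m b^%:A) 0 0 = 0 -> (u *m b^%:A) 0 0 = 0).
Proof.
split=> [/submx_colkerP uv b | uv]; last apply/submx_colkerP=> b.
  by move/eqP; rewrite -supp_mx_mul_eq0 => /eqP/uv/eqP; rewrite supp_mx_mul_eq0 => /eqP.
by move/eqP; rewrite supp_mx_mul_eq0 => /eqP/uv/eqP; rewrite -supp_mx_mul_eq0 => /eqP.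
Qed.

Lemma supp_sub_submx u v : supp_sub u v -> (u <= (supp_mx v)^%:A)%MS.
Proof. by move=> uv; rewrite -(entry_basis_row_supp_mx u) mulmx_sub // map_submx. Qed.

Lemma galois_closed_row_span r (S : 'M[F]_(r, n)) : galois_closed (row_span S^%:A).
Proof.
move=> x; rewrite !mem_row_span => /submxP[c ->]; apply/submxP.
exists (map_mx (@frob F L) c); rewrite -[frobv _]/(map_mx (@frob F L) _) map_mxM.
by rewrite -map_mx_comp; congr (_ *m _); apply: eq_map_mx=> a; rewrite /= frob_alg.
Qed.

Lemma galois_closed_base_row_span A : galois_closed A ->
  exists r (S : 'M[F]_(r, n)), (r <= \dim A)%N /\ A = row_span S^%:A.
Proof.
move=> closedA.
have [W eqWA [f Wf]] := row_pivot_basis (vspace_mx A).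
have memA x : (x \in A) = (x <= W)%MS.
  by rewrite -{1}(row_span_vspace_mx A) mem_row_span (eqmxP eqWA).
have frobW : map_mx (@frob F L) W = W.
  apply: map_pivot_basis_id Wf _; apply/row_subP=> i.
  by rewrite -map_row -memA; apply: closedA; rewrite memA row_sub.
have W_F i j : exists a : F, W i j == a%:A.
  have /frob_fixedP[a ->] : frob (W i j) == W i j by rewrite -{2}frobW mxE.
  by exists a.
exists (\rank (vspace_mx A)), (\matrix_(i, j) xchoose (W_F i j)).
split; first exact: rank_leq_row.
apply/vspaceP=> x; rewrite memA mem_row_span; congr (_ <= _)%MS.
by apply/matrixP=> i j; rewrite !mxE; apply/eqP/(xchooseP (W_F i j)).
Qed.

Lemma exists_supp_sub_combination A v1 v2 :
  galois_closed A -> (\dim A <= \dim {:L})%N ->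
  v1 \in A -> v2 \in A -> exists x : L, supp_sub v2 (v1 + x *: v2).
Proof.
move=> closedA dimA; have [r [S [r_le ->]]] := galois_closed_base_row_span closedA.
rewrite !mem_row_span => /submxP[c1 ->] /submxP[c2 ->].
have [||x generic_x] := exists_generic_scalar (fun a : 'cV[F]_r => (c1 *m a^%:A) 0 0)
  (y2 := fun a => (c2 *m a^%:A) 0 0) (t0 := 0).
- rewrite card_mx muln1 leq_pexp2l ?(leq_trans r_le dimA) //.
  exact: ltnW (finNzRing_gt1 F).
- by rewrite !mxE big1 // => i _; rewrite !mxE rmorph0 mulr0.
exists x; apply/supp_subP=> b; rewrite scalemxAl -mulmxDl -!mulmxA -map_mxM.
move=> comb0; apply: generic_x; move: comb0.
by rewrite mulmxDl -scalemxAl [X in X = 0 -> _]mxE [X in _ + X = 0 -> _]mxE.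
Qed.

Lemma minimal_code_dim_gt C : minimal_code C ->
  forall A, galois_closed A -> (2 <= \dim (A :&: C))%N -> (\dim {:L} < \dim A)%N.
Proof.
move=> minC A closedA /dimv_ge2P[v1 [v2 [v1AC v2AC v2_nz v1_notin]]].
rewrite ltnNge; apply/negP=> dimA.
move: v1AC v2AC; rewrite !memv_cap => /andP[v1A v1C] /andP[v2A v2C].
have [x v2_v] := exists_supp_sub_combination closedA dimA v1A v2A.
have vC : v1 + x *: v2 \in C by rewrite rpredD ?rpredZ.
have v_nz : v1 + x *: v2 != 0.
  apply: contraNneq v1_notin => /eqP; rewrite addr_eq0 => /eqP ->.
  by rewrite -scaleNr memvZ ?memv_line.
have [_ _ /(_ v2 v2C) [/(_ v2_v) [lam v2E] _]] := minC _ vC v_nz.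
have lam_nz : lam != 0 by apply: contraNneq v2_nz => lam0; rewrite v2E lam0 scale0r.
case/vlineP: v1_notin; exists (lam^-1 - x).
by rewrite scalerBl {1}v2E scalerA mulVf // scale1r addrK.
Qed.

Lemma minimal_code_of_dim_gt C :
  (forall A, galois_closed A -> (2 <= \dim (A :&: C))%N -> (\dim {:L} < \dim A)%N) ->
  minimal_code C.
Proof.
move=> dim_gt v vC v_nz; split=> // u uC; split=> [uv | [lam ->]]; last first.
  by apply/supp_subP=> b vb0; rewrite -scalemxAl [LHS]mxE vb0 mulr0.
apply/vlineP; apply: contraT=> u_notin.
pose A := row_span (supp_mx v)^%:A.
have memA w : supp_sub w v -> w \in A by move/supp_sub_submx; rewrite mem_row_span.
have uA : u \in A := memA u uv.
have vA : v \in A by apply: memA; apply: submx_refl.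
have dimAC : (2 <= \dim (A :&: C))%N.
  by apply/dimv_ge2P; exists u, v; rewrite !memv_cap uA uC vA vC.
have dimA : (\dim A <= \dim {:L})%N.
  exact: leq_trans (dim_row_span _) (dimvS (subvf _)).
by move: (dim_gt A (galois_closed_row_span (S := supp_mx v)) dimAC); rewrite ltnNge dimA.
Qed.

Lemma minimal_codeP C : minimal_code C <->
  (forall A, galois_closed A -> (2 <= \dim (A :&: C))%N -> (\dim {:L} < \dim A)%N).
Proof. by split; [apply: minimal_code_dim_gt | apply: minimal_code_of_dim_gt]. Qed.

End RankMetricCode.

(* Only [\dim {:L} = m] and the defining property of [d2] are used. *)
Theorem theorem3p4 (F : finFieldType) (L : fieldExtType F) (m n k : nat)
  (C : {vspace 'rV[L]_n}) :
  dimv (fullv : {vspace L}) = m -> (0 < m)%N -> (0 < n)%N -> (2 <= k)%N ->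
  dimv C = k -> nondegenerate_code C ->
  forall d2 : nat, is_gen_rank_weight C 2 d2 ->
  (minimal_code C <-> (m.+1 <= d2)%N).
Proof.
move=> dimL _ _ _ _ _ d2 [[A0 [closedA0 dimA0C dimA0]] d2_min].
apply: iff_trans (minimal_codeP C) _; rewrite -dimL.
split=> [dim_gt | d2_gt A closedA dimAC].
  by rewrite -dimA0; apply: dim_gt.
exact: leq_trans d2_gt (d2_min A closedA dimAC).
Qed.
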